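(* Let $\varepsilon>0$, $\Omega\subset\mathbb{R}^2$ bounded open, $u\in\mathcal{SF}_\varepsilon(\Omega)$, $R\in\mathcal{R}_\varepsilon(u)$ and $T\in\mathcal{T}_\varepsilon$ with $T\subset R$. Then: (a) if $T$ has exactly one edge in $\mathcal{N}_\varepsilon(u)$, then $T$ contains at least one boundary edge of $R$; (b) if $T$ has exactly one edge in $\mathcal{N}_\varepsilon(u)$ and $u(\mathcal{L}_\varepsilon(R))$ contains four points, then $T$ contains two boundary edges of $R$.
   Context: $\mathcal{L}=\{ae_1+b\hat e_2:a,b\in\mathbb{Z}\}$ with $e_1=(1,0)$, $\hat e_2=\frac12(1,\sqrt3)$, $\mathcal{L}_\varepsilon=\varepsilon\mathcal{L}$, $\mathcal{L}_\varepsilon(R)=\mathcal{L}_\varepsilon\cap R$; $\mathcal{T}_\varepsilon$ is the set of closed triangles with vertices in $\mathcal{L}_\varepsilon$ pairwise at distance $\varepsilon$; $\mathcal{E}_\varepsilon$ the set of segments $[i,j]$, $i,j\in\mathcal{L}_\varepsilon$, $|i-j|=\varepsilon$. $n=(0,0,1)$; $\mathcal{SF}_\varepsilon(\Omega)$ is the set of $u:\mathcal{L}_\varepsilon\to\mathbb{S}^2$ with $u=n$ on $\mathcal{L}_\varepsilon\setminus\Omega$. $\mathcal{N}_\varepsilon(u)=\{[i,j]\in\mathcal{E}_\varepsilon:u(i)=-u(j)\}$, $\mathcal{C}_\varepsilon(u)=\mathcal{E}_\varepsilon\setminus\mathcal{N}_\varepsilon(u)$. Two triangles of $\mathcal{T}_\varepsilon$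 are neighbours if their intersection is an edge in $\mathcal{N}_\varepsilon(u)$, and connected if joined by a finite chain of consecutive neighbours. $\mathcal{R}_\varepsilon(u)$ is the set of admissible interpolation regions: unions of pairwise connected triangles of $\mathcal{T}_\varepsilon$ that are maximal with respect to inclusion. A boundary edge of $R$ is an edge $[i,j]\in\mathcal{C}_\varepsilon(u)$ which is the common edge of a triangle $T\subseteq R$ and a triangle $T'\in\mathcal{T}_\varepsilon$ with $T'\subseteq\mathbb{R}^2\setminus\mathrm{int}(R)$. *)

From Stdlib Require Import Reals ZArith Relations.
Open Scope R_scope.

Definition pt := (R * R)%type.
Definition vec3 := (R * R * R)%type.
Definition set2 := pt -> Prop.

Definition subset2 (A B : set2) : Prop := forall p, A p -> B p.

Definition dist2 (p q : pt) : R :=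
  sqrt ((fst p - fst q) ^ 2 + (snd p - snd q) ^ 2).

Definition open2 (O : set2) : Prop :=
  forall p, O p -> exists r, 0 < r /\ forall q, dist2 p q < r -> O q.

Definition bounded2 (O : set2) : Prop :=
  exists M, forall p, O p -> dist2 p (0, 0) <= M.

Definition interior2 (A : set2) : set2 :=
  fun p => exists r, 0 < r /\ forall q, dist2 p q < r -> A q.

(* L_eps = eps * { a e1 + b e2hat : a b in Z }, e1 = (1,0), e2hat = (1/2, sqrt3/2) *)
Definition lattice_pt (eps : R) (p : pt) : Prop :=
  exists a b : Z, p = (eps * (IZR a + IZR b / 2), eps * (IZR b * sqrt 3 / 2)).

Definition in_S2 (v : vec3) : Prop :=
  let '(x, y, z) := v in x ^ 2 + y ^ 2 + z ^ 2 = 1.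
Definition north : vec3 := (0, 0, 1).
Definition vneg (v : vec3) : vec3 := let '(x, y, z) := v in (- x, - y, - z).

(* SF_eps(Omega): u : L_eps -> S^2 (values of u off the lattice are irrelevant),
   u = n on L_eps \ Omega *)
Definition SF (eps : R) (Om : set2) (u : pt -> vec3) : Prop :=
  (forall i, lattice_pt eps i -> in_S2 (u i)) /\
  (forall i, lattice_pt eps i -> ~ Om i -> u i = north).

Definition seg (i j : pt) : set2 :=
  fun p => exists t, 0 <= t <= 1 /\
    p = ((1 - t) * fst i + t * fst j, (1 - t) * snd i + t * snd j).

Definition tri (i j k : pt) : set2 :=
  fun p => exists a b c, 0 <= a /\ 0 <= b /\ 0 <= c /\ a + b + c = 1 /\
    p = (a * fst i + b * fst j + c * fst k, a * snd i + b * snd j + c * snd k).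

Definition lat_pair (eps : R) (i j : pt) : Prop :=
  lattice_pt eps i /\ lattice_pt eps j /\ dist2 i j = eps.

Definition in_E (eps : R) (E : set2) : Prop :=
  exists i j, lat_pair eps i j /\ E = seg i j.

Definition in_T (eps : R) (T : set2) : Prop :=
  exists i j k, lat_pair eps i j /\ lat_pair eps j k /\ lat_pair eps i k /\
    T = tri i j k.

Definition side (E T : set2) : Prop :=
  exists i j k, T = tri i j k /\ E = seg i j.

Definition in_N (eps : R) (u : pt -> vec3) (E : set2) : Prop :=
  exists i j, lat_pair eps i j /\ E = seg i j /\ u i = vneg (u j).

Definition in_C (eps : R) (u : pt -> vec3) (E : set2) : Prop :=
  in_E eps E /\ ~ in_N eps u E.

Definition neighbours (eps : R) (u : pt -> vec3) (T1 T2 : set2) : Prop :=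
  in_T eps T1 /\ in_T eps T2 /\
  exists E, in_N eps u E /\ (fun p => T1 p /\ T2 p) = E.

Definition connected_tri (eps : R) (u : pt -> vec3) : set2 -> set2 -> Prop :=
  clos_refl_trans set2 (neighbours eps u).

Definition union_fam (F : set2 -> Prop) : set2 := fun p => exists T, F T /\ T p.

Definition pc_union (eps : R) (u : pt -> vec3) (Rg : set2) : Prop :=
  exists F : set2 -> Prop,
    (forall T, F T -> in_T eps T) /\
    (forall T1 T2, F T1 -> F T2 -> connected_tri eps u T1 T2) /\
    Rg = union_fam F.

Definition admissible_region (eps : R) (u : pt -> vec3) (Rg : set2) : Prop :=
  pc_union eps u Rg /\
  forall Rg', pc_union eps u Rg' -> subset2 Rg Rg' -> Rg' = Rg.

Definition boundary_edge (eps : R) (u : pt -> vec3) (Rg E : set2) : Prop :=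
  in_C eps u E /\
  exists T T', in_T eps T /\ subset2 T Rg /\ in_T eps T' /\
    subset2 T' (fun p => ~ interior2 Rg p) /\ side E T /\ side E T'.

Definition exactly_one_N (eps : R) (u : pt -> vec3) (T : set2) : Prop :=
  exists E, side E T /\ in_N eps u E /\
    forall E', side E' T -> in_N eps u E' -> E' = E.

Definition u_image (eps : R) (u : pt -> vec3) (Rg : set2) : vec3 -> Prop :=
  fun v => exists i, lattice_pt eps i /\ Rg i /\ v = u i.

Definition four_points (V : vec3 -> Prop) : Prop :=
  exists v1 v2 v3 v4,
    v1 <> v2 /\ v1 <> v3 /\ v1 <> v4 /\ v2 <> v3 /\ v2 <> v4 /\ v3 <> v4 /\
    forall v, V v <-> (v = v1 \/ v = v2 \/ v = v3 \/ v = v4).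

From Stdlib Require Import Reals ZArith Relations.
From Stdlib Require Import Lia Lra Psatz Wf_nat.
From Stdlib Require Import Classical FunctionalExtensionality PropExtensionality.

(* Label the lattice by integer coordinates, so that the triangles of T_eps are the unit
   triangles of Z^2 in the basis (e1, e2hat); the triangle across a side is obtained by
   reflecting the opposite vertex. Arbitrarily close to any point of a triangle there are points
   lying in no other triangle, so a triangle that is not part of R avoids the interior of R, and a
   non-antipodal side of T across which the neighbouring triangle is not in R is a boundary edge.

   A triangle cannot have three antipodal sides (that would give u(i) = -u(i)), so every
   triangle has at most two neighbours, and a connected family cannot contain three triangles
   with at most one neighbour each: a path has only two ends. If T has the single antipodal side
   p q, then T has at most one neighbour, and so have the triangles across q r and across p r
   (two antipodal new sides would make p r, resp. q r, antipodal). Hence one of these two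
   triangles is not in R, which gives (a).

   For (b), suppose the triangle across q r belongs to R. Along chains of neighbours from T,
   every antipodal side has endpoints with values in {u(p), u(q)} = {u(p), -u(p)}, and every
   triangle of R other than T and that neighbour has two antipodal sides (otherwise it would be
   a third end), so u only takes the values u(p), u(q), u(r) on R, contradicting four values. *)

Section MaxDegreeTwoGraph.
Open Scope nat_scope.

Context {V : Type}.
Variable adj : V -> V -> Prop.

Definition walk (w : nat -> V) (n : nat) (x y : V) : Prop :=
  w 0 = x /\ w n = y /\ forall k, k < n -> adj (w k) (w (S k)).

Definition shortest_walk (w : nat -> V) (n : nat) (x y : V) : Prop :=
  walk w n x y /\ forall w' m, walk w' m x y -> n <= m.

Definition degree_le1 (x : V) : Prop := forall y1 y2, adj x y1 -> adj x y2 -> y1 = y2.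

Lemma walk_of_rt x y : clos_refl_trans V adj x y -> exists w n, walk w n x y.
Proof.
  intros Hxy. apply clos_rt_rtn1 in Hxy. induction Hxy as [|y z Hyz _ IH].
  - exists (fun _ => x), 0. repeat split; auto. intros k Hk; lia.
  - destruct IH as [w [n (W0 & Wn & Wadj)]].
    exists (fun k => if k <=? n then w k else z), (S n). repeat split.
    + exact W0.
    + destruct (Nat.leb_spec (S n) n); [lia | reflexivity].
    + intros k Hk. destruct (Nat.leb_spec k n), (Nat.leb_spec (S k) n); try lia.
      * apply Wadj; lia.
      * replace k with n by lia. rewrite Wn. exact Hyz.
Qed.

Lemma shortest_walk_of_rt x y : clos_refl_trans V adj x y -> exists w n, shortest_walk w n x y.
Proof.
  intros Hxy. destruct (walk_of_rt x y Hxy) as [w [n Hw]].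
  destruct (dec_inh_nat_subset_has_unique_least_element (fun n => exists w, walk w n x y))
    as [m [[[w' Hw'] Hmin] _]].
  - intros m. apply classic.
  - eauto.
  - exists w', m. split; auto. intros w'' m' H'. apply Hmin. eauto.
Qed.

Lemma shortest_walk_no_backtrack w n x y k :
  shortest_walk w n x y -> S k < n -> w k <> w (S (S k)).
Proof.
  intros [(W0 & Wn & Wadj) Hmin] Hk Hback.
  assert (Hshort : walk (fun j => if j <=? k then w j else w (S (S j))) (n - 2) x y).
  { repeat split.
    - exact W0.
    - destruct (Nat.leb_spec (n - 2) k).
      + replace k with (n - 2) in Hback by lia. rewrite Hback.
        replace (S (S (n - 2))) with n by lia. exact Wn.
      + replace (S (S (n - 2))) with n by lia. exact Wn.
    - intros j Hj. destruct (Nat.leb_spec j k), (Nat.leb_spec (S j) k); try lia.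
      + apply Wadj; lia.
      + replace j with k by lia. rewrite Hback. apply Wadj; lia.
      + apply Wadj; lia. }
  specialize (Hmin _ _ Hshort). lia.
Qed.

Hypothesis adj_sym : forall x y, adj x y -> adj y x.
Hypothesis adj_deg2 : forall x y1 y2 y3,
  adj x y1 -> adj x y2 -> adj x y3 -> y1 = y2 \/ y1 = y3 \/ y2 = y3.

(* Without backtracking, a walk leaving an end vertex has at most one way to continue. *)
Lemma shortest_walks_from_end_agree t x y w n v m :
  degree_le1 t -> shortest_walk w n t x -> shortest_walk v m t y ->
  forall k, k <= n -> k <= m -> w k = v k.
Proof.
  intros Ht Hw Hv.
  assert (Hstep : forall k, S k <= n -> S k <= m -> w k = v k /\ w (S k) = v (S k)).
  { pose proof (fun k => shortest_walk_no_backtrack w n t x k Hw) as NBw.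
    pose proof (fun k => shortest_walk_no_backtrack v m t y k Hv) as NBv.
    destruct Hw as [(W0 & _ & Wadj) _], Hv as [(V0 & _ & Vadj) _].
    induction k as [|k IH]; intros Hn Hm.
    - split; [congruence|]. apply Ht; [rewrite <- W0 | rewrite <- V0]; auto.
    - destruct IH as [Ek ESk]; try lia. split; [exact ESk|].
      destruct (adj_deg2 (w (S k)) (w (S (S k))) (v (S (S k))) (w k)) as [E|[E|E]].
      + apply Wadj; lia.
      + rewrite ESk. apply Vadj; lia.
      + apply adj_sym, Wadj; lia.
      + exact E.
      + exfalso. apply (NBw k); [lia | congruence].
      + exfalso. apply (NBv k); [lia | congruence]. }
  intros [|k] Hn Hm.
  - destruct Hw as [(W0 & _) _], Hv as [(V0 & _) _]. congruence.
  - apply Hstep; lia.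
Qed.

Lemma no_three_ends_connected t x y :
  degree_le1 t -> degree_le1 x -> degree_le1 y -> t <> x -> t <> y -> x <> y ->
  clos_refl_trans V adj t x -> clos_refl_trans V adj t y -> False.
Proof.
  intros Ht Hx Hy Htx Hty Hxy Rx Ry.
  assert (Hcloser : forall x y w n v m, degree_le1 x -> t <> x ->
            shortest_walk w n t x -> shortest_walk v m t y -> n < m -> False).
  { clear - adj_sym adj_deg2 Ht. intros x y w n v m Hx Htx Hw Hv Hlt.
    pose proof (shortest_walks_from_end_agree t x y w n v m Ht Hw Hv n ltac:(lia) ltac:(lia)) as E.
    destruct n as [|n].
    - destruct Hw as [(W0 & Wn & _) _]. congruence.
    - apply (shortest_walk_no_backtrack v m t y n Hv ltac:(lia)).
      destruct Hw as [(_ & Wn & _) _], Hv as [(_ & _ & Vadj) _].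
      apply Hx; rewrite <- Wn, E; [apply adj_sym|]; apply Vadj; lia. }
  destruct (shortest_walk_of_rt t x Rx) as [w [n Hw]].
  destruct (shortest_walk_of_rt t y Ry) as [v [m Hv]].
  destruct (lt_eq_lt_dec n m) as [[Hlt|<-]|Hgt].
  - exact (Hcloser x y w n v m Hx Htx Hw Hv Hlt).
  - apply Hxy.
    pose proof (shortest_walks_from_end_agree t x y w n v n Ht Hw Hv n (le_n n) (le_n n)).
    destruct Hw as [(_ & Wn & _) _], Hv as [(_ & Vn & _) _]. congruence.
  - exact (Hcloser y x v m w n Hy Hty Hv Hw Hgt).
Qed.

End MaxDegreeTwoGraph.

Definition zpt := (Z * Z)%type.

Definition lat_adj (z w : zpt) : Prop :=
  (fst w = fst z + 1 /\ snd w = snd z)%Z \/ (fst w = fst z - 1 /\ snd w = snd z)%Z \/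
  (fst w = fst z /\ snd w = snd z + 1)%Z \/ (fst w = fst z /\ snd w = snd z - 1)%Z \/
  (fst w = fst z + 1 /\ snd w = snd z - 1)%Z \/ (fst w = fst z - 1 /\ snd w = snd z + 1)%Z.

Definition unit_tri (a b c : zpt) : Prop := lat_adj a b /\ lat_adj b c /\ lat_adj a c.

Definition opp_vertex (a b c : zpt) : zpt := (fst a + fst b - fst c, snd a + snd b - snd c)%Z.

Definition is_vertex (a b c w : zpt) : Prop := w = a \/ w = b \/ w = c.

Definition perm3 (x y : zpt * zpt * zpt) : Prop :=
  let '(a, b, c) := x in
  y = (a, b, c) \/ y = (b, a, c) \/ y = (a, c, b) \/ y = (b, c, a) \/ y = (c, a, b) \/ y = (c, b, a).

(* In coordinates (s, t) the diagonal s + t = a + b + 1 cuts the unit rhombus with corner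
   (a, b) into [std_tri true a b] and [std_tri false a b]; every unit triangle is one of these. *)
Definition std_tri (up : bool) (a b : Z) : zpt * zpt * zpt :=
  if up then ((a, b), (a + 1, b), (a, b + 1))%Z
  else ((a + 1, b), (a, b + 1), (a + 1, b + 1))%Z.

Ltac destruct_zpts :=
  repeat match goal with p : zpt |- _ => destruct p | p : (Z * Z)%type |- _ => destruct p end;
  unfold unit_tri, lat_adj, opp_vertex in *; simpl in *.

Ltac discard_Z_contradiction :=
  try (exfalso; match goal with H : (_ = _)%Z |- _ => clear - H; lia end).

Ltac split_lat_adj :=
  intros; repeat match goal with H : _ /\ _ |- _ => destruct H end;
  repeat (match goal with H : _ \/ _ |- _ => destruct H as [[? ?]|H] end; subst;
          discard_Z_contradiction);
  repeat match goal with H : _ /\ _ |- _ => destruct H end; subst; discard_Z_contradiction.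

Ltac lat_cases := destruct_zpts; split_lat_adj; try lia.

Lemma zpt_neq (a b c d : Z) : (a <> c \/ b <> d) -> (a, b) <> (c, d).
Proof. intros H E; injection E; intros; destruct H; auto. Qed.

Lemma lat_adj_sym z w : lat_adj z w -> lat_adj w z.
Proof. lat_cases. Qed.

Lemma lat_adj_neq z w : lat_adj z w -> z <> w.
Proof. lat_cases; apply zpt_neq; lia. Qed.

Lemma unit_norm_cases x y : (x * x + x * y + y * y = 1)%Z ->
  (x = 1 /\ y = 0 \/ x = -1 /\ y = 0 \/ x = 0 /\ y = 1 \/ x = 0 /\ y = -1 \/
   x = 1 /\ y = -1 \/ x = -1 /\ y = 1)%Z.
Proof.
  intros H. assert (-1 <= y <= 1)%Z by nia. assert (-1 <= x <= 1)%Z by nia.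
  assert (Hx : (x = -1 \/ x = 0 \/ x = 1)%Z) by lia.
  assert (Hy : (y = -1 \/ y = 0 \/ y = 1)%Z) by lia.
  destruct Hx as [-> | [-> | ->]]; destruct Hy as [-> | [-> | ->]]; simpl in H; lia.
Qed.

Lemma lat_adj_norm z w : lat_adj z w <->
  ((fst z - fst w) * (fst z - fst w) + (fst z - fst w) * (snd z - snd w)
   + (snd z - snd w) * (snd z - snd w) = 1)%Z.
Proof.
  split.
  - unfold lat_adj. intros [[-> ->]|[[-> ->]|[[-> ->]|[[-> ->]|[[-> ->]|[-> ->]]]]]]; ring.
  - intros H. apply unit_norm_cases in H. unfold lat_adj. lia.
Qed.

Lemma unit_tri_rot a b c : unit_tri a b c -> unit_tri b c a.
Proof. unfold unit_tri; intuition (auto using lat_adj_sym). Qed.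

Lemma unit_tri_swap12 a b c : unit_tri a b c -> unit_tri b a c.
Proof. unfold unit_tri; intuition (auto using lat_adj_sym). Qed.

Lemma unit_tri_swap23 a b c : unit_tri a b c -> unit_tri a c b.
Proof. unfold unit_tri; intuition (auto using lat_adj_sym). Qed.

Lemma unit_tri_perm3 x y : perm3 x y ->
  let '(a, b, c) := x in let '(a', b', c') := y in unit_tri a b c -> unit_tri a' b' c'.
Proof.
  destruct x as [[a b] c], y as [[a' b'] c']. simpl.
  intros [E|[E|[E|[E|[E|E]]]]]; injection E; intros; subst;
    eauto using unit_tri_rot, unit_tri_swap12, unit_tri_swap23.
Qed.

Lemma perm3_of_vertices w1 w2 w3 a b : is_vertex w1 w2 w3 a -> is_vertex w1 w2 w3 b -> a <> b ->
  exists c, perm3 (w1, w2, w3) (a, b, c).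
Proof.
  unfold is_vertex, perm3.
  intros [-> | [-> | ->]] [-> | [-> | ->]] Hne; try (exfalso; apply Hne; reflexivity);
    first [exists w1; tauto | exists w2; tauto | exists w3; tauto].
Qed.

Lemma unit_tri_third a b c c' : unit_tri a b c -> lat_adj a c' -> lat_adj b c' ->
  c' = c \/ c' = opp_vertex a b c.
Proof.
  lat_cases; first [left; f_equal; lia | right; f_equal; lia].
Qed.

Lemma unit_tri_opp a b c : unit_tri a b c -> unit_tri a b (opp_vertex a b c).
Proof. lat_cases. Qed.

Lemma opp_vertex_new a b c : unit_tri a b c ->
  opp_vertex a b c <> a /\ opp_vertex a b c <> b /\ opp_vertex a b c <> c.
Proof. lat_cases; repeat split; apply zpt_neq; lia. Qed.

Lemma opp_vertexC a b c : opp_vertex a b c = opp_vertex b a c.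
Proof. destruct_zpts; f_equal; lia. Qed.

Lemma opp_vertices_neq p q r : unit_tri p q r -> opp_vertex p r q <> opp_vertex q r p.
Proof. lat_cases; apply zpt_neq; lia. Qed.

Lemma zpt3_eq (a1 a2 b1 b2 c1 c2 a1' a2' b1' b2' c1' c2' : Z) :
  a1 = a1' -> a2 = a2' -> b1 = b1' -> b2 = b2' -> c1 = c1' -> c2 = c2' ->
  ((a1, a2), (b1, b2), (c1, c2)) = ((a1', a2'), (b1', b2'), (c1', c2')).
Proof. intros; subst; reflexivity. Qed.

Ltac solve_perm3 := first [apply zpt3_eq; lia | left; apply zpt3_eq; lia | right; solve_perm3].

Lemma unit_tri_std z1 z2 z3 : unit_tri z1 z2 z3 ->
  exists up a b, perm3 (z1, z2, z3) (std_tri up a b).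
Proof.
  destruct z1 as [a1 b1], z2 as [a2 b2], z3 as [a3 b3]. intros H.
  cut (perm3 ((a1, b1), (a2, b2), (a3, b3))
          (std_tri true (Z.min a1 (Z.min a2 a3)) (Z.min b1 (Z.min b2 b3))) \/
       perm3 ((a1, b1), (a2, b2), (a3, b3))
          (std_tri false (Z.max a1 (Z.max a2 a3) - 1) (Z.max b1 (Z.max b2 b3) - 1))).
  { intros [H'|H']; eauto. }
  revert H. unfold perm3, std_tri. lat_cases; first [left; solve_perm3 | right; solve_perm3].
Qed.

Lemma set2_ext (A B : set2) : (forall p, A p <-> B p) -> A = B.
Proof.
  intros H. apply functional_extensionality. intros p. apply propositional_extensionality, H.
Qed.

Lemma tri_swap12 x y w : tri x y w = tri y x w.
Proof.
  apply set2_ext; intros p; split; intros (a & b & c & Ha & Hb & Hc & Hs & ->);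
    exists b, a, c; repeat split; try lra; f_equal; ring.
Qed.

Lemma tri_swap23 x y w : tri x y w = tri x w y.
Proof.
  apply set2_ext; intros p; split; intros (a & b & c & Ha & Hb & Hc & Hs & ->);
    exists a, c, b; repeat split; try lra; f_equal; ring.
Qed.

Lemma tri_rot x y w : tri x y w = tri y w x.
Proof. rewrite tri_swap12, tri_swap23. reflexivity. Qed.

Lemma seg_sub_tri x y w : subset2 (seg x y) (tri x y w).
Proof. intros p (t & Ht & ->). exists (1 - t), t, 0. repeat split; try lra; f_equal; ring. Qed.

Lemma tri_vertex1 x y w : tri x y w x.
Proof. exists 1, 0, 0. repeat split; try lra. destruct x; simpl; f_equal; ring. Qed.

Lemma tri_vertex2 x y w : tri x y w y.
Proof. rewrite tri_swap12. apply tri_vertex1. Qed.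

Lemma tri_vertex3 x y w : tri x y w w.
Proof. rewrite tri_rot, tri_rot. apply tri_vertex1. Qed.

Lemma seg_end1 x y : seg x y x.
Proof. exists 0. repeat split; try lra. destruct x; simpl; f_equal; ring. Qed.

Lemma seg_end2 x y : seg x y y.
Proof. exists 1. repeat split; try lra. destruct y; simpl; f_equal; ring. Qed.

Lemma dist2_toward p g d : 0 <= d ->
  dist2 p ((1 - d) * fst p + d * fst g, (1 - d) * snd p + d * snd g) = d * dist2 p g.
Proof.
  intros Hd. unfold dist2; cbn [fst snd].
  replace ((fst p - ((1 - d) * fst p + d * fst g)) ^ 2 + (snd p - ((1 - d) * snd p + d * snd g)) ^ 2)
    with (d ^ 2 * ((fst p - fst g) ^ 2 + (snd p - snd g) ^ 2)) by ring.
  rewrite sqrt_mult_alt, sqrt_pow2 by (try apply pow2_ge_0; lra). reflexivity.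
Qed.

Lemma small_step D r : 0 <= D -> 0 < r -> exists d, 0 < d <= 1 /\ d * D < r.
Proof.
  intros HD Hr. exists (Rmin 1 (r / (D + 1))).
  assert (Hq : 0 < r / (D + 1)) by (apply Rdiv_lt_0_compat; lra).
  assert (Hq' : r / (D + 1) * D < r).
  { replace (r / (D + 1) * D) with (r - r / (D + 1)) by (field; lra). lra. }
  pose proof (Rmin_r 1 (r / (D + 1))). pose proof (Rmin_l 1 (r / (D + 1))).
  repeat split; try nra. apply Rmin_glb_lt; lra.
Qed.

Lemma sqrt3_pos : 0 < sqrt 3.
Proof. apply sqrt_lt_R0; lra. Qed.

Lemma sqrt3_sq : sqrt 3 * sqrt 3 = 3.
Proof. apply sqrt_sqrt; lra. Qed.

Definition is_vertex_of (x : zpt * zpt * zpt) (w : zpt) : Prop :=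
  let '(a, b, c) := x in is_vertex a b c w.

Lemma is_vertex_of_perm3 x y w : perm3 x y -> (is_vertex_of x w <-> is_vertex_of y w).
Proof.
  destruct x as [[a b] c]. simpl.
  intros [-> | [-> | [-> | [-> | [-> | ->]]]]]; cbv [is_vertex_of is_vertex]; tauto.
Qed.

Definition std_region (up : bool) (a b : Z) (s t : R) : Prop :=
  if up then IZR a <= s /\ IZR b <= t /\ s + t <= IZR a + IZR b + 1
  else s <= IZR a + 1 /\ t <= IZR b + 1 /\ IZR a + IZR b + 1 <= s + t.

Definition std_open_region (up : bool) (a b : Z) (s t : R) : Prop :=
  if up then IZR a < s /\ IZR b < t /\ s + t < IZR a + IZR b + 1
  else s < IZR a + 1 /\ t < IZR b + 1 /\ IZR a + IZR b + 1 < s + t.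

Lemma std_open_region_sub up a b s t : std_open_region up a b s t -> std_region up a b s t.
Proof. destruct up; cbv [std_region std_open_region]; lra. Qed.

Lemma IZR_lt_succ (x y : Z) : IZR x < IZR y + 1 -> (x <= y)%Z.
Proof. intros H. rewrite <- (Z.lt_succ_r x y). apply lt_IZR. rewrite succ_IZR. exact H. Qed.

Ltac Z_le_of_lt_succ x y := assert ((x <= y)%Z) by (apply IZR_lt_succ; rewrite ?plus_IZR; lra).
Ltac Z_lt_of_IZR x y := assert ((x < y)%Z) by (apply lt_IZR; rewrite ?plus_IZR; lra).
Ltac Z_le_of_IZR x y := assert ((x <= y)%Z) by (apply le_IZR; rewrite ?plus_IZR; lra).

Lemma std_region_lattice up a b c d :
  std_region up a b (IZR c) (IZR d) -> is_vertex_of (std_tri up a b) (c, d).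
Proof.
  destruct up; cbv [std_region std_tri is_vertex_of is_vertex]; intros (H1 & H2 & H3).
  - Z_le_of_IZR a c. Z_le_of_IZR b d. Z_le_of_IZR (c + d)%Z (a + b + 1)%Z.
    assert (HH : (c = a /\ d = b \/ c = a + 1 /\ d = b \/ c = a /\ d = b + 1)%Z) by lia.
    destruct HH as [[-> ->]|[[-> ->]|[-> ->]]]; auto.
  - Z_le_of_IZR c (a + 1)%Z. Z_le_of_IZR d (b + 1)%Z. Z_le_of_IZR (a + b + 1)%Z (c + d)%Z.
    assert (HH : (c = a + 1 /\ d = b \/ c = a /\ d = b + 1 \/ c = a + 1 /\ d = b + 1)%Z) by lia.
    destruct HH as [[-> ->]|[[-> ->]|[-> ->]]]; auto.
Qed.

Lemma std_open_region_unique up a b up' a' b' s t :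
  std_open_region up a b s t -> std_region up' a' b' s t -> up' = up /\ a' = a /\ b' = b.
Proof.
  destruct up, up'; cbv [std_region std_open_region]; intros (H1 & H2 & H3) (H4 & H5 & H6).
  - Z_le_of_lt_succ a' a. Z_le_of_lt_succ b' b. Z_le_of_lt_succ (a + b)%Z (a' + b')%Z.
    repeat split; lia.
  - exfalso. Z_le_of_lt_succ a a'. Z_le_of_lt_succ b b'. Z_lt_of_IZR (a' + b')%Z (a + b)%Z. lia.
  - exfalso. Z_le_of_lt_succ a' a. Z_le_of_lt_succ b' b. Z_lt_of_IZR (a + b)%Z (a' + b')%Z. lia.
  - Z_le_of_lt_succ a' a. Z_le_of_lt_succ b' b. Z_le_of_lt_succ (a + b)%Z (a' + b')%Z.
    repeat split; lia.
Qed.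

(* [skew eps s t] is the point with coordinates (s, t) in the basis (eps e1, eps e2hat). *)
Definition skew (eps s t : R) : pt := (eps * (s + t / 2), eps * (t * sqrt 3 / 2)).
Definition lat (eps : R) (z : zpt) : pt := skew eps (IZR (fst z)) (IZR (snd z)).
Definition skew_s (eps : R) (p : pt) : R := fst p / eps - snd p / (eps * sqrt 3).
Definition skew_t (eps : R) (p : pt) : R := 2 * snd p / (eps * sqrt 3).

Notation lat_tri eps a b c := (tri (lat eps a) (lat eps b) (lat eps c)).

Section TriangularLattice.

Variable eps : R.
Hypothesis eps_pos : 0 < eps.

Lemma skew_s_skew s t : skew_s eps (skew eps s t) = s.
Proof. unfold skew_s, skew; simpl. pose proof sqrt3_pos. field; lra. Qed.

Lemma skew_t_skew s t : skew_t eps (skew eps s t) = t.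
Proof. unfold skew_t, skew; simpl. pose proof sqrt3_pos. field; lra. Qed.

Lemma skew_eta p : p = skew eps (skew_s eps p) (skew_t eps p).
Proof.
  destruct p as [x y]. unfold skew_s, skew_t, skew; simpl.
  pose proof sqrt3_pos. pose proof sqrt3_sq. f_equal; field; lra.
Qed.

Lemma skew_coords_inj p q : skew_s eps p = skew_s eps q -> skew_t eps p = skew_t eps q -> p = q.
Proof. intros Hs Ht. rewrite (skew_eta p), (skew_eta q), Hs, Ht. reflexivity. Qed.

Lemma skew_s_lat z : skew_s eps (lat eps z) = IZR (fst z).
Proof. apply skew_s_skew. Qed.

Lemma skew_t_lat z : skew_t eps (lat eps z) = IZR (snd z).
Proof. apply skew_t_skew. Qed.

Lemma skew_s_comb2 t x y :
  skew_s eps ((1 - t) * fst x + t * fst y, (1 - t) * snd x + t * snd y)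
  = (1 - t) * skew_s eps x + t * skew_s eps y.
Proof. unfold skew_s; simpl. pose proof sqrt3_pos. field; lra. Qed.

Lemma skew_t_comb2 t x y :
  skew_t eps ((1 - t) * fst x + t * fst y, (1 - t) * snd x + t * snd y)
  = (1 - t) * skew_t eps x + t * skew_t eps y.
Proof. unfold skew_t; simpl. pose proof sqrt3_pos. field; lra. Qed.

Lemma skew_s_comb3 a b c x y w :
  skew_s eps (a * fst x + b * fst y + c * fst w, a * snd x + b * snd y + c * snd w)
  = a * skew_s eps x + b * skew_s eps y + c * skew_s eps w.
Proof. unfold skew_s; simpl. pose proof sqrt3_pos. field; lra. Qed.

Lemma skew_t_comb3 a b c x y w :
  skew_t eps (a * fst x + b * fst y + c * fst w, a * snd x + b * snd y + c * snd w)
  = a * skew_t eps x + b * skew_t eps y + c * skew_t eps w.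
Proof. unfold skew_t; simpl. pose proof sqrt3_pos. field; lra. Qed.

Lemma tri_skew x y w p : tri x y w p <->
  exists a b c, 0 <= a /\ 0 <= b /\ 0 <= c /\ a + b + c = 1 /\
    skew_s eps p = a * skew_s eps x + b * skew_s eps y + c * skew_s eps w /\
    skew_t eps p = a * skew_t eps x + b * skew_t eps y + c * skew_t eps w.
Proof.
  split.
  - intros (a & b & c & Ha & Hb & Hc & Hs & ->). exists a, b, c.
    rewrite skew_s_comb3, skew_t_comb3. tauto.
  - intros (a & b & c & Ha & Hb & Hc & Hs & H1 & H2). exists a, b, c.
    repeat split; auto. apply skew_coords_inj; [rewrite skew_s_comb3 | rewrite skew_t_comb3]; auto.
Qed.

Lemma dist2_skew s t s' t' :
  dist2 (skew eps s t) (skew eps s' t')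
  = eps * sqrt ((s - s') ^ 2 + (s - s') * (t - t') + (t - t') ^ 2).
Proof.
  unfold dist2, skew; cbn [fst snd].
  replace ((eps * (s + t / 2) - eps * (s' + t' / 2)) ^ 2 +
           (eps * (t * sqrt 3 / 2) - eps * (t' * sqrt 3 / 2)) ^ 2)
    with (eps ^ 2 * ((s - s') ^ 2 + (s - s') * (t - t') + (t - t') ^ 2 / 4 * (1 + sqrt 3 * sqrt 3)))
    by field.
  rewrite sqrt3_sq, sqrt_mult_alt, sqrt_pow2 by (try apply pow2_ge_0; lra).
  f_equal. f_equal. field.
Qed.

Lemma dist2_lat z w : dist2 (lat eps z) (lat eps w) = eps <-> lat_adj z w.
Proof.
  unfold lat. rewrite dist2_skew, lat_adj_norm.
  set (x := (fst z - fst w)%Z). set (y := (snd z - snd w)%Z).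
  replace ((IZR (fst z) - IZR (fst w)) ^ 2 + (IZR (fst z) - IZR (fst w)) * (IZR (snd z) - IZR (snd w))
           + (IZR (snd z) - IZR (snd w)) ^ 2) with (IZR (x * x + x * y + y * y))
    by (unfold x, y; rewrite !plus_IZR, !mult_IZR, !minus_IZR; ring).
  split.
  - intros Hd. apply eq_IZR.
    assert (Hsq : sqrt (IZR (x * x + x * y + y * y)) = 1).
    { apply (Rmult_eq_reg_l eps); lra. }
    rewrite <- (sqrt_sqrt (IZR (x * x + x * y + y * y))), Hsq; [ring|].
    apply IZR_le. nia.
  - intros ->. rewrite sqrt_1. ring.
Qed.

Lemma lattice_ptE p : lattice_pt eps p <-> exists z, p = lat eps z.
Proof.
  split.
  - intros (a & b & ->). exists (a, b). reflexivity.
  - intros ([a b] & ->). exists a, b. reflexivity.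
Qed.

Lemma lattice_pt_lat z : lattice_pt eps (lat eps z).
Proof. apply lattice_ptE; eauto. Qed.

Lemma lat_pair_lat a b : lat_adj a b -> lat_pair eps (lat eps a) (lat eps b).
Proof.
  intros H. repeat split; try apply lattice_pt_lat. apply dist2_lat, H.
Qed.

Lemma lat_pairE i j : lat_pair eps i j -> exists a b, i = lat eps a /\ j = lat eps b /\ lat_adj a b.
Proof.
  intros (Hi & Hj & Hd). apply lattice_ptE in Hi as [a ->]. apply lattice_ptE in Hj as [b ->].
  exists a, b. repeat split. apply dist2_lat, Hd.
Qed.

Lemma in_TE X : in_T eps X -> exists z1 z2 z3, unit_tri z1 z2 z3 /\ X = lat_tri eps z1 z2 z3.
Proof.
  intros (i & j & k & Hij & (_ & Hk & Hjk) & (_ & _ & Hik) & ->).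
  destruct (lat_pairE i j Hij) as (a & b & -> & -> & Hab).
  apply lattice_ptE in Hk as [c ->].
  exists a, b, c. repeat split; auto; apply dist2_lat; auto.
Qed.

Lemma in_T_lat z1 z2 z3 : unit_tri z1 z2 z3 -> in_T eps (lat_tri eps z1 z2 z3).
Proof.
  intros (H12 & H23 & H13). exists (lat eps z1), (lat eps z2), (lat eps z3).
  repeat split; try apply lattice_pt_lat; apply dist2_lat; auto.
Qed.

Lemma lat_notin_seg z1 z2 z3 : lat_adj z1 z2 -> lat_adj z1 z3 -> z2 <> z3 ->
  ~ seg (lat eps z1) (lat eps z2) (lat eps z3).
Proof.
  intros H12 H13 Hne (t & Ht & E).
  assert (Es := f_equal (skew_s eps) E). assert (Et := f_equal (skew_t eps) E).
  rewrite skew_s_comb2, !skew_s_lat in Es. rewrite skew_t_comb2, !skew_t_lat in Et.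
  apply lat_adj_norm in H12, H13.
  destruct z1 as [a1 b1], z2 as [a2 b2], z3 as [a3 b3]; cbn [fst snd] in *.
  apply (f_equal IZR) in H12, H13. rewrite !plus_IZR, !mult_IZR, !minus_IZR in H12, H13.
  (* the unit vector z3 - z1 is t times the unit vector z2 - z1, so t = 1 *)
  assert (Ht1 : t = 1).
  { assert (Hsq : t ^ 2 = 1).
    { rewrite Es, Et in H13. rewrite <- H13. nra. }
    nra. }
  subst t. apply Hne. f_equal; apply eq_IZR; lra.
Qed.

Definition tri_of (x : zpt * zpt * zpt) : set2 :=
  let '(a, b, c) := x in lat_tri eps a b c.

Lemma tri_of_perm3 x y : perm3 x y -> tri_of x = tri_of y.
Proof.
  destruct x as [[a b] c]. simpl.
  intros [-> | [-> | [-> | [-> | [-> | ->]]]]]; simpl.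
  - reflexivity.
  - apply tri_swap12.
  - apply tri_swap23.
  - apply tri_rot.
  - rewrite tri_rot. apply tri_rot.
  - rewrite tri_swap23, tri_rot. reflexivity.
Qed.

Lemma tri_of_std up a b p :
  tri_of (std_tri up a b) p <-> std_region up a b (skew_s eps p) (skew_t eps p).
Proof.
  destruct up; cbv [std_tri tri_of std_region]; rewrite tri_skew;
    rewrite !skew_s_lat, !skew_t_lat; cbn [fst snd]; rewrite !plus_IZR;
    generalize (IZR a) (IZR b) (skew_s eps p) (skew_t eps p); intros A B s t; split.
  - intros (x & y & z & Hx & Hy & Hz & Hs & -> & ->). repeat split; nra.
  - intros (H1 & H2 & H3). exists (1 - (s - A) - (t - B)), (s - A), (t - B).
    repeat split; try lra; ring.
  - intros (x & y & z & Hx & Hy & Hz & Hs & -> & ->). repeat split; nra.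
  - intros (H1 & H2 & H3). exists (B + 1 - t), (A + 1 - s), (s + t - A - B - 1).
    repeat split; try lra; ring.
Qed.

Lemma lattice_in_tri_is_vertex z1 z2 z3 w : unit_tri z1 z2 z3 ->
  lat_tri eps z1 z2 z3 (lat eps w) -> is_vertex z1 z2 z3 w.
Proof.
  intros Hu Hw. destruct (unit_tri_std _ _ _ Hu) as (up & a & b & Hp).
  change (tri_of (z1, z2, z3) (lat eps w)) in Hw.
  rewrite (tri_of_perm3 _ _ Hp), tri_of_std, skew_s_lat, skew_t_lat in Hw.
  destruct w as [c d]. apply (is_vertex_of_perm3 _ _ _ Hp), std_region_lattice, Hw.
Qed.

Lemma lat_tri_perm3 z1 z2 z3 a b c : perm3 (z1, z2, z3) (a, b, c) ->
  lat_tri eps z1 z2 z3 = lat_tri eps a b c.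
Proof. exact (tri_of_perm3 (z1, z2, z3) (a, b, c)). Qed.

Lemma edge_perm3 z1 z2 z3 a b : unit_tri z1 z2 z3 -> lat_adj a b ->
  subset2 (seg (lat eps a) (lat eps b)) (lat_tri eps z1 z2 z3) ->
  exists c, perm3 (z1, z2, z3) (a, b, c).
Proof.
  intros Hu Hab Hsub.
  apply perm3_of_vertices; [| | exact (lat_adj_neq _ _ Hab)];
    apply (lattice_in_tri_is_vertex _ _ _ _ Hu), Hsub; [apply seg_end1 | apply seg_end2].
Qed.

Lemma tri_private_point z1 z2 z3 p r : unit_tri z1 z2 z3 ->
  lat_tri eps z1 z2 z3 p -> 0 < r ->
  exists q, dist2 p q < r /\ lat_tri eps z1 z2 z3 q /\
    forall X, in_T eps X -> X q -> X = lat_tri eps z1 z2 z3.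
Proof.
  intros Hu Hp Hr. destruct (unit_tri_std _ _ _ Hu) as (up & a & b & Hperm).
  change (lat_tri eps z1 z2 z3) with (tri_of (z1, z2, z3)) in *.
  rewrite (tri_of_perm3 _ _ Hperm) in *. apply tri_of_std in Hp.
  set (gs := if up then IZR a + 1/3 else IZR a + 2/3).
  set (gt := if up then IZR b + 1/3 else IZR b + 2/3).
  set (g := skew eps gs gt).
  destruct (small_step (dist2 p g) r (sqrt_pos _) Hr) as (d & Hd & Hdr).
  set (q := ((1 - d) * fst p + d * fst g, (1 - d) * snd p + d * snd g)).
  (* moving towards the centroid [g] by a positive fraction lands in the open triangle *)
  assert (Hq : std_open_region up a b (skew_s eps q) (skew_t eps q)).
  { unfold q. rewrite skew_s_comb2, skew_t_comb2.
    unfold g. rewrite skew_s_skew, skew_t_skew.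
    destruct up; unfold gs, gt; cbv [std_region std_open_region] in *;
      destruct Hp as (H1 & H2 & H3); repeat split; nra. }
  exists q. split; [|split].
  - unfold q. rewrite dist2_toward by lra. exact Hdr.
  - apply tri_of_std, std_open_region_sub, Hq.
  - intros X HX Hxq. destruct (in_TE X HX) as (y1 & y2 & y3 & Hy & ->).
    destruct (unit_tri_std _ _ _ Hy) as (up' & a' & b' & Hperm').
    change (lat_tri eps y1 y2 y3) with (tri_of (y1, y2, y3)) in *.
    rewrite (tri_of_perm3 _ _ Hperm') in *. apply tri_of_std in Hxq.
    destruct (std_open_region_unique _ _ _ _ _ _ _ _ Hq Hxq) as (-> & -> & ->). reflexivity.
Qed.

Lemma lat_in_edge a b c w : unit_tri a b c ->
  seg (lat eps a) (lat eps b) (lat eps w) -> w = a \/ w = b.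
Proof.
  intros Hu Hw.
  destruct (lattice_in_tri_is_vertex a b c w Hu (seg_sub_tri _ _ _ _ Hw)) as [| [| ->]]; auto.
  destruct Hu as (Hab & Hbc & Hac). exfalso. apply (lat_notin_seg a b c Hab Hac); auto.
  intros ->. exact (lat_adj_neq _ _ Hbc eq_refl).
Qed.

Lemma lat_tri_neq_of_vertex (X : set2) a b c w : unit_tri a b c -> X (lat eps w) ->
  ~ is_vertex a b c w -> X <> lat_tri eps a b c.
Proof.
  intros Hu Hw Hnv ->. exact (Hnv (lattice_in_tri_is_vertex _ _ _ _ Hu Hw)).
Qed.

End TriangularLattice.

Lemma vnegK v : vneg (vneg v) = v.
Proof. destruct v as [[x y] z]. simpl. rewrite !Ropp_involutive. reflexivity. Qed.

Lemma S2_neq_vneg v : in_S2 v -> v <> vneg v.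
Proof.
  destruct v as [[x y] z]. simpl. intros H E. injection E as Ex Ey Ez. nra.
Qed.

Section Neighbours.

Variable eps : R.
Variable u : pt -> vec3.
Hypothesis eps_pos : 0 < eps.
Hypothesis u_S2 : forall z, in_S2 (u (lat eps z)).

Definition antipodal (a b : zpt) : Prop := u (lat eps a) = vneg (u (lat eps b)).

Lemma antipodal_sym a b : antipodal a b -> antipodal b a.
Proof. unfold antipodal. intros H. rewrite H, vnegK. reflexivity. Qed.

Lemma no_antipodal_triangle a b c : antipodal a b -> antipodal a c -> antipodal b c -> False.
Proof.
  unfold antipodal. intros Hab Hac Hbc. apply (S2_neq_vneg _ (u_S2 c)).
  rewrite <- Hbc, <- (vnegK (u (lat eps b))), <- Hab, Hac, vnegK. reflexivity.
Qed.

Lemma neighbours_sym X Y : neighbours eps u X Y -> neighbours eps u Y X.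
Proof.
  intros (HX & HY & E & HN & HE). repeat split; auto. exists E. split; auto.
  rewrite <- HE. apply set2_ext. intros p; tauto.
Qed.

Lemma tri_meeting_in_side a b c Y : unit_tri a b c -> in_T eps Y ->
  (fun p => lat_tri eps a b c p /\ Y p) = seg (lat eps a) (lat eps b) ->
  Y = lat_tri eps a b (opp_vertex a b c).
Proof.
  intros Hu HY HE. destruct (in_TE eps eps_pos Y HY) as (w1 & w2 & w3 & Hw & ->).
  destruct Hu as (Hab & Hbc & Hac).
  destruct (edge_perm3 eps eps_pos w1 w2 w3 a b Hw Hab) as [c' Hp].
  { intros p Hp. rewrite <- HE in Hp. apply Hp. }
  destruct (unit_tri_perm3 _ _ Hp Hw) as (_ & Hbc' & Hac').
  rewrite (lat_tri_perm3 eps _ _ _ _ _ _ Hp) in *.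
  destruct (unit_tri_third a b c c' (conj Hab (conj Hbc Hac)) Hac' Hbc') as [-> | ->]; auto.
  exfalso. apply (lat_notin_seg eps eps_pos a b c Hab Hac).
  - intros ->. exact (lat_adj_neq _ _ Hbc eq_refl).
  - rewrite <- HE. split; apply tri_vertex3.
Qed.

Lemma neighbours_across_edge z1 z2 z3 Y : unit_tri z1 z2 z3 ->
  neighbours eps u (lat_tri eps z1 z2 z3) Y ->
  exists a b c, perm3 (z1, z2, z3) (a, b, c) /\ antipodal a b /\
    Y = lat_tri eps a b (opp_vertex a b c).
Proof.
  intros Hu (_ & HY & E & (i & j & Hij & -> & Hn) & HE).
  destruct (lat_pairE eps eps_pos i j Hij) as (a & b & -> & -> & Hab).
  destruct (edge_perm3 eps eps_pos z1 z2 z3 a b Hu Hab) as [c Hp].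
  { intros p Hp. rewrite <- HE in Hp. apply Hp. }
  exists a, b, c. repeat split; [exact Hp | exact Hn |].
  apply tri_meeting_in_side; [exact (unit_tri_perm3 _ _ Hp Hu) | exact HY |].
  rewrite <- (lat_tri_perm3 eps _ _ _ _ _ _ Hp). exact HE.
Qed.

Lemma neighbours_cases z1 z2 z3 Y : unit_tri z1 z2 z3 ->
  neighbours eps u (lat_tri eps z1 z2 z3) Y ->
  (antipodal z1 z2 /\ Y = lat_tri eps z1 z2 (opp_vertex z1 z2 z3)) \/
  (antipodal z1 z3 /\ Y = lat_tri eps z1 z3 (opp_vertex z1 z3 z2)) \/
  (antipodal z2 z3 /\ Y = lat_tri eps z2 z3 (opp_vertex z2 z3 z1)).
Proof.
  intros Hu HN. destruct (neighbours_across_edge z1 z2 z3 Y Hu HN) as (a & b & c & Hp & Hab & ->).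
  assert (Hba := antipodal_sym a b Hab).
  assert (Hswap : lat_tri eps a b (opp_vertex a b c) = lat_tri eps b a (opp_vertex b a c))
    by (rewrite tri_swap12, opp_vertexC; reflexivity).
  destruct Hp as [E|[E|[E|[E|[E|E]]]]]; injection E as -> -> ->;
    first [left; split; [assumption | congruence] | right; left; split; [assumption | congruence]
          | right; right; split; [assumption | congruence]].
Qed.

Lemma neighbours_deg2 X Y1 Y2 Y3 :
  neighbours eps u X Y1 -> neighbours eps u X Y2 -> neighbours eps u X Y3 ->
  Y1 = Y2 \/ Y1 = Y3 \/ Y2 = Y3.
Proof.
  intros H1 H2 H3.
  destruct (in_TE eps eps_pos X (proj1 H1)) as (z1 & z2 & z3 & Hu & ->).
  destruct (neighbours_cases _ _ _ _ Hu H1) as [[N1 E1]|[[N1 E1]|[N1 E1]]];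
  destruct (neighbours_cases _ _ _ _ Hu H2) as [[N2 E2]|[[N2 E2]|[N2 E2]]];
  destruct (neighbours_cases _ _ _ _ Hu H3) as [[N3 E3]|[[N3 E3]|[N3 E3]]];
  first [left; congruence | right; left; congruence | right; right; congruence
        | exfalso; apply (no_antipodal_triangle z1 z2 z3); assumption].
Qed.

Lemma degree_le1_tri z1 z2 z3 : unit_tri z1 z2 z3 ->
  ~ (antipodal z1 z2 /\ antipodal z1 z3) -> ~ (antipodal z1 z2 /\ antipodal z2 z3) ->
  ~ (antipodal z1 z3 /\ antipodal z2 z3) ->
  degree_le1 (neighbours eps u) (lat_tri eps z1 z2 z3).
Proof.
  intros Hu A1 A2 A3 Y1 Y2 H1 H2.
  destruct (neighbours_cases _ _ _ _ Hu H1) as [[N1 E1]|[[N1 E1]|[N1 E1]]];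
  destruct (neighbours_cases _ _ _ _ Hu H2) as [[N2 E2]|[[N2 E2]|[N2 E2]]];
  first [congruence | exfalso; tauto].
Qed.

Lemma in_C_edge a b c : unit_tri a b c -> ~ antipodal a b ->
  in_C eps u (seg (lat eps a) (lat eps b)).
Proof.
  intros Hu Hn. split.
  - exists (lat eps a), (lat eps b). split; [apply (lat_pair_lat eps eps_pos), Hu | reflexivity].
  - intros (i & j & Hij & HE & Hanti).
    destruct (lat_pairE eps eps_pos i j Hij) as (zi & zj & -> & -> & Hadj).
    assert (Hi := lat_in_edge eps eps_pos a b c zi Hu ltac:(rewrite HE; apply seg_end1)).
    assert (Hj := lat_in_edge eps eps_pos a b c zj Hu ltac:(rewrite HE; apply seg_end2)).
    change (antipodal zi zj) in Hanti. pose proof (lat_adj_neq _ _ Hadj).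
    destruct Hi as [-> | ->], Hj as [-> | ->]; try contradiction.
    apply Hn, antipodal_sym, Hanti.
Qed.

Lemma exactly_one_N_tri z1 z2 z3 : unit_tri z1 z2 z3 ->
  exactly_one_N eps u (lat_tri eps z1 z2 z3) ->
  exists p q r, perm3 (z1, z2, z3) (p, q, r) /\ antipodal p q /\ ~ antipodal q r /\ ~ antipodal p r.
Proof.
  intros Hu (E0 & (i & j & k & HT & HE0) & (a & b & Hij & HEab & Hn) & Hunique).
  destruct (lat_pairE eps eps_pos a b Hij) as (p & q & -> & -> & Hpq).
  destruct (edge_perm3 eps eps_pos z1 z2 z3 p q Hu Hpq) as [r Hp].
  { rewrite HT, <- HEab, HE0. apply seg_sub_tri. }
  assert (Ht := lat_tri_perm3 eps _ _ _ _ _ _ Hp).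
  destruct (unit_tri_perm3 _ _ Hp Hu) as (_ & Hqr & Hpr).
  (* a second antipodal side x r would coincide with [p q] and contain r *)
  assert (Hside : forall x, lat_adj x r -> side (seg (lat eps x) (lat eps r)) (lat_tri eps z1 z2 z3) ->
                    ~ antipodal x r).
  { intros x Hxr Hx Hxr'.
    assert (HE : seg (lat eps x) (lat eps r) = E0).
    { apply Hunique; [exact Hx |]. exists (lat eps x), (lat eps r).
      split; [apply (lat_pair_lat eps eps_pos), Hxr | split; [reflexivity | exact Hxr']]. }
    assert (Hr : seg (lat eps p) (lat eps q) (lat eps r)) by (rewrite <- HEab, <- HE; apply seg_end2).
    destruct (lat_in_edge eps eps_pos p q r r (conj Hpq (conj Hqr Hpr)) Hr) as [E | E]; subst r.
    - exact (lat_adj_neq _ _ Hpr eq_refl).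
    - exact (lat_adj_neq _ _ Hqr eq_refl). }
  exists p, q, r. repeat split; [exact Hp | exact Hn | |].
  - apply Hside; [exact Hqr |]. exists (lat eps q), (lat eps r), (lat eps p). split; [|reflexivity].
    rewrite Ht. apply tri_rot.
  - apply Hside; [exact Hpr |]. exists (lat eps p), (lat eps r), (lat eps q). split; [|reflexivity].
    rewrite Ht. apply tri_swap23.
Qed.

End Neighbours.

Lemma four_points_not_sub3 (V : vec3 -> Prop) a b c :
  four_points V -> (forall v, V v -> v = a \/ v = b \/ v = c) -> False.
Proof.
  intros (v1 & v2 & v3 & v4 & n12 & n13 & n14 & n23 & n24 & n34 & HV) Hsub.
  destruct (Hsub v1 (proj2 (HV v1) (or_introl eq_refl))) as [-> | [-> | ->]],
           (Hsub v2 (proj2 (HV v2) (or_intror (or_introl eq_refl)))) as [-> | [-> | ->]],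
           (Hsub v3 (proj2 (HV v3) (or_intror (or_intror (or_introl eq_refl))))) as [-> | [-> | ->]],
           (Hsub v4 (proj2 (HV v4) (or_intror (or_intror (or_intror eq_refl))))) as [-> | [-> | ->]];
    congruence.
Qed.

Section ConnectedFamily.

Variable eps : R.
Variable u : pt -> vec3.
Variable F : set2 -> Prop.
Variable Rg : set2.
Hypothesis eps_pos : 0 < eps.
Hypothesis F_tri : forall X, F X -> in_T eps X.
Hypothesis Rg_union : Rg = union_fam F.

Lemma family_mem_of_covered z1 z2 z3 p r : unit_tri z1 z2 z3 -> lat_tri eps z1 z2 z3 p -> 0 < r ->
  (forall q, dist2 p q < r -> lat_tri eps z1 z2 z3 q -> Rg q) -> F (lat_tri eps z1 z2 z3).
Proof.
  intros Hu Hp Hr Hcov.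
  destruct (tri_private_point eps eps_pos _ _ _ p r Hu Hp Hr) as (q & Hd & Hq & Hprivate).
  specialize (Hcov q Hd Hq). rewrite Rg_union in Hcov. destruct Hcov as (X & HX & HXq).
  rewrite <- (Hprivate X (F_tri X HX) HXq). exact HX.
Qed.

Lemma tri_outside_interior z1 z2 z3 : unit_tri z1 z2 z3 -> ~ F (lat_tri eps z1 z2 z3) ->
  subset2 (lat_tri eps z1 z2 z3) (fun p => ~ interior2 Rg p).
Proof.
  intros Hu HnF p Hp (r & Hr & Hball). apply HnF.
  apply (family_mem_of_covered _ _ _ p r); auto.
Qed.

Lemma boundary_edge_of_missing_neighbour a b c : unit_tri a b c -> ~ antipodal eps u a b ->
  subset2 (lat_tri eps a b c) Rg -> ~ F (lat_tri eps a b (opp_vertex a b c)) ->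
  boundary_edge eps u Rg (seg (lat eps a) (lat eps b)).
Proof.
  intros Hu Hn Hsub HnF. split; [exact (in_C_edge eps u eps_pos a b c Hu Hn)|].
  assert (Hu' := unit_tri_opp _ _ _ Hu).
  exists (lat_tri eps a b c), (lat_tri eps a b (opp_vertex a b c)).
  repeat split; auto using in_T_lat, tri_outside_interior.
  - exists (lat eps a), (lat eps b), (lat eps c). auto.
  - exists (lat eps a), (lat eps b), (lat eps (opp_vertex a b c)). auto.
Qed.

Hypothesis u_S2 : forall z, in_S2 (u (lat eps z)).
Hypothesis F_connected : forall X Y, F X -> F Y -> connected_tri eps u X Y.

Section OneAntipodalSide.

Variables p q r : zpt.
Hypothesis pqr_tri : unit_tri p q r.
Hypothesis T_in_F : F (lat_tri eps p q r).
Hypothesis pq_anti : antipodal eps u p q.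
Hypothesis qr_not_anti : ~ antipodal eps u q r.
Hypothesis pr_not_anti : ~ antipodal eps u p r.

Lemma vneg_u_p : vneg (u (lat eps p)) = u (lat eps q).
Proof. rewrite pq_anti, vnegK. reflexivity. Qed.

Lemma vneg_u_q : vneg (u (lat eps q)) = u (lat eps p).
Proof. rewrite <- pq_anti. reflexivity. Qed.

Lemma pqr_degree_le1 : degree_le1 (neighbours eps u) (lat_tri eps p q r).
Proof. apply degree_le1_tri; auto; tauto. Qed.

(* If both new sides were antipodal, u q = u r and the side p r would be antipodal. *)
Lemma across_qr_degree_le1 : degree_le1 (neighbours eps u) (lat_tri eps q r (opp_vertex q r p)).
Proof.
  apply degree_le1_tri; auto using unit_tri_opp, unit_tri_rot; try tauto.
  intros [Hq Hr]. apply pr_not_anti. unfold antipodal in *.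
  rewrite <- vneg_u_q, Hq, Hr. reflexivity.
Qed.

Lemma across_qr_neq_pqr : lat_tri eps q r (opp_vertex q r p) <> lat_tri eps p q r.
Proof.
  destruct (opp_vertex_new q r p (unit_tri_rot _ _ _ pqr_tri)) as (N1 & N2 & N3).
  apply (lat_tri_neq_of_vertex eps eps_pos _ p q r (opp_vertex q r p) pqr_tri).
  - apply tri_vertex3.
  - unfold is_vertex. tauto.
Qed.

Definition antipodal_values_in (X : set2) : Prop :=
  forall a b, X (lat eps a) -> X (lat eps b) -> lat_adj a b -> antipodal eps u a b ->
    u (lat eps a) = u (lat eps p) \/ u (lat eps a) = u (lat eps q).

Lemma antipodal_values_in_pqr : antipodal_values_in (lat_tri eps p q r).
Proof.
  intros a b Ha Hb Hab Hn.
  apply (lattice_in_tri_is_vertex eps eps_pos _ _ _ _ pqr_tri) in Ha, Hb.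
  destruct Ha as [-> | [-> | ->]]; auto.
  destruct Hb as [-> | [-> | ->]]; exfalso.
  - apply pr_not_anti, antipodal_sym, Hn.
  - apply qr_not_anti, antipodal_sym, Hn.
  - exact (lat_adj_neq _ _ Hab eq_refl).
Qed.

(* Crossing an antipodal side a b, the new vertex takes the value opposite to a or b. *)
Lemma antipodal_values_in_step a b c : unit_tri a b c -> antipodal eps u a b ->
  antipodal_values_in (lat_tri eps a b c) ->
  antipodal_values_in (lat_tri eps a b (opp_vertex a b c)).
Proof.
  intros Hu Hab HJ d e Hd He Hde Hn.
  assert (Ja := HJ a b (tri_vertex1 _ _ _) (tri_vertex2 _ _ _) (proj1 Hu) Hab).
  assert (Jb := HJ b a (tri_vertex2 _ _ _) (tri_vertex1 _ _ _)
                  (lat_adj_sym _ _ (proj1 Hu)) (antipodal_sym _ _ _ _ Hab)).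
  apply (lattice_in_tri_is_vertex eps eps_pos _ _ _ _ (unit_tri_opp _ _ _ Hu)) in Hd, He.
  destruct Hd as [-> | [-> | ->]]; auto.
  unfold antipodal in Hn. rewrite Hn.
  destruct He as [-> | [-> | ->]].
  - destruct Ja as [E|E]; rewrite E; auto using vneg_u_p, vneg_u_q.
  - destruct Jb as [E|E]; rewrite E; auto using vneg_u_p, vneg_u_q.
  - exfalso. exact (lat_adj_neq _ _ Hde eq_refl).
Qed.

Lemma antipodal_values_in_neighbour X Y : neighbours eps u X Y ->
  antipodal_values_in X -> antipodal_values_in Y.
Proof.
  intros HXY HJ. destruct (in_TE eps eps_pos X (proj1 HXY)) as (z1 & z2 & z3 & Hu & ->).
  destruct (neighbours_across_edge eps u eps_pos _ _ _ _ Hu HXY) as (a & b & c & Hp & Hab & ->).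
  rewrite (lat_tri_perm3 eps _ _ _ _ _ _ Hp) in HJ.
  exact (antipodal_values_in_step a b c (unit_tri_perm3 _ _ Hp Hu) Hab HJ).
Qed.

Lemma antipodal_values_in_family X : F X -> antipodal_values_in X.
Proof.
  intros HX.
  assert (Htrans : forall Y Z, connected_tri eps u Y Z ->
                    antipodal_values_in Y -> antipodal_values_in Z)
    by (induction 1; eauto using antipodal_values_in_neighbour).
  exact (Htrans _ _ (F_connected _ _ T_in_F HX) antipodal_values_in_pqr).
Qed.

Lemma vertex_values_of_two_antipodal z1 z2 z3 : unit_tri z1 z2 z3 ->
  antipodal_values_in (lat_tri eps z1 z2 z3) ->
  antipodal eps u z1 z2 /\ antipodal eps u z1 z3 \/ antipodal eps u z1 z2 /\ antipodal eps u z2 z3 \/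
  antipodal eps u z1 z3 /\ antipodal eps u z2 z3 ->
  forall w, is_vertex z1 z2 z3 w -> u (lat eps w) = u (lat eps p) \/ u (lat eps w) = u (lat eps q).
Proof.
  intros (H12 & H23 & H13) HJ Hanti w Hw.
  pose proof (lat_adj_sym _ _ H12). pose proof (lat_adj_sym _ _ H23). pose proof (lat_adj_sym _ _ H13).
  (* each vertex is an endpoint of one of the two antipodal sides *)
  destruct Hanti as [[A B]|[[A B]|[A B]]];
    pose proof (antipodal_sym _ _ _ _ A); pose proof (antipodal_sym _ _ _ _ B);
    destruct Hw as [-> | [-> | ->]];
    first [apply (HJ _ _ (tri_vertex1 _ _ _) (tri_vertex2 _ _ _)); solve [auto]
          | apply (HJ _ _ (tri_vertex1 _ _ _) (tri_vertex3 _ _ _)); solve [auto]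
          | apply (HJ _ _ (tri_vertex2 _ _ _) (tri_vertex1 _ _ _)); solve [auto]
          | apply (HJ _ _ (tri_vertex2 _ _ _) (tri_vertex3 _ _ _)); solve [auto]
          | apply (HJ _ _ (tri_vertex3 _ _ _) (tri_vertex1 _ _ _)); solve [auto]
          | apply (HJ _ _ (tri_vertex3 _ _ _) (tri_vertex2 _ _ _)); solve [auto]].
Qed.

(* A chain from T enters the triangle q r r' (r' the reflection of p) through an antipodal side
   other than q r: across q r' it gives u r' = -u q = u p, across r r' it would make u r equal
   to u p or u q. *)
Lemma across_qr_vertex_values : F (lat_tri eps q r (opp_vertex q r p)) ->
  forall w, is_vertex q r (opp_vertex q r p) w ->
  u (lat eps w) = u (lat eps p) \/ u (lat eps w) = u (lat eps q) \/ u (lat eps w) = u (lat eps r).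
Proof.
  intros HB w [-> | [-> | ->]]; auto. left.
  assert (HuB := unit_tri_opp _ _ _ (unit_tri_rot _ _ _ pqr_tri)).
  assert (HTB := clos_rt_rtn1 _ _ _ _ (F_connected _ _ T_in_F HB)).
  inversion HTB as [HE | Z ? HZB _]; [exfalso; exact (across_qr_neq_pqr (eq_sym HE)) |].
  destruct (neighbours_cases eps u eps_pos _ _ _ _ HuB (neighbours_sym eps u _ _ HZB))
    as [[Hn _]|[[Hn _]|[Hn _]]].
  - contradiction.
  - unfold antipodal in Hn. rewrite <- vneg_u_q, Hn, vnegK. reflexivity.
  - exfalso.
    destruct (antipodal_values_in_family _ HB r (opp_vertex q r p)
                (tri_vertex2 _ _ _) (tri_vertex3 _ _ _) (proj1 (proj2 HuB)) Hn) as [E|E].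
    + apply qr_not_anti. unfold antipodal. rewrite E, vneg_u_p. reflexivity.
    + apply pr_not_anti. unfold antipodal. rewrite E. exact pq_anti.
Qed.

Lemma across_qr_in_family_image : F (lat_tri eps q r (opp_vertex q r p)) ->
  forall v, u_image eps u Rg v -> v = u (lat eps p) \/ v = u (lat eps q) \/ v = u (lat eps r).
Proof.
  intros HB v (i & Hi & HRi & ->). apply (lattice_ptE eps) in Hi as [w ->].
  rewrite Rg_union in HRi. destruct HRi as (X & HX & Hw).
  destruct (classic (X = lat_tri eps p q r)) as [->|HXT].
  { apply (lattice_in_tri_is_vertex eps eps_pos _ _ _ _ pqr_tri) in Hw.
    destruct Hw as [-> | [-> | ->]]; auto. }
  destruct (classic (X = lat_tri eps q r (opp_vertex q r p))) as [->|HXB].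
  { apply (lattice_in_tri_is_vertex eps eps_pos _ _ _ _
             (unit_tri_opp _ _ _ (unit_tri_rot _ _ _ pqr_tri))) in Hw.
    exact (across_qr_vertex_values HB w Hw). }
  destruct (in_TE eps eps_pos X (F_tri X HX)) as (z1 & z2 & z3 & Hu & ->).
  apply (lattice_in_tri_is_vertex eps eps_pos _ _ _ _ Hu) in Hw.
  (* a third triangle with at most one antipodal side would be a third end of the path *)
  destruct (classic (antipodal eps u z1 z2 /\ antipodal eps u z1 z3 \/
                     antipodal eps u z1 z2 /\ antipodal eps u z2 z3 \/
                     antipodal eps u z1 z3 /\ antipodal eps u z2 z3)) as [H2|H2].
  - destruct (vertex_values_of_two_antipodal z1 z2 z3 Hu (antipodal_values_in_family _ HX) H2 w Hw);
      auto.
  - exfalso.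
    apply (no_three_ends_connected (neighbours eps u) (neighbours_sym eps u)
             (neighbours_deg2 eps u eps_pos u_S2) _ _ (lat_tri eps z1 z2 z3)
             pqr_degree_le1 across_qr_degree_le1).
    + apply degree_le1_tri; auto; tauto.
    + intros E. exact (across_qr_neq_pqr (eq_sym E)).
    + intros E. exact (HXT (eq_sym E)).
    + intros E. exact (HXB (eq_sym E)).
    + apply F_connected; assumption.
    + apply F_connected; assumption.
Qed.

End OneAntipodalSide.

(* T and its two neighbours across the non-antipodal sides would be three ends of one path. *)
Lemma not_both_across_in_family p q r : unit_tri p q r -> F (lat_tri eps p q r) ->
  antipodal eps u p q -> ~ antipodal eps u q r -> ~ antipodal eps u p r ->
  F (lat_tri eps q r (opp_vertex q r p)) -> F (lat_tri eps p r (opp_vertex p r q)) -> False.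
Proof.
  intros Hu HT Hpq Hqr Hpr HB HL.
  assert (Hu' := unit_tri_swap12 _ _ _ Hu).
  assert (Hqp := antipodal_sym _ _ _ _ Hpq).
  assert (HL_T : lat_tri eps p r (opp_vertex p r q) <> lat_tri eps p q r).
  { rewrite (tri_swap12 (lat eps p) (lat eps q)). exact (across_qr_neq_pqr q p r Hu'). }
  assert (HL_B : lat_tri eps p r (opp_vertex p r q) <> lat_tri eps q r (opp_vertex q r p)).
  { destruct (opp_vertex_new p r q (unit_tri_swap23 _ _ _ Hu)) as (N1 & N2 & N3).
    apply (lat_tri_neq_of_vertex eps eps_pos _ _ _ _ (opp_vertex p r q)
             (unit_tri_opp _ _ _ (unit_tri_rot _ _ _ Hu)) (tri_vertex3 _ _ _)).
    pose proof (opp_vertices_neq p q r Hu). unfold is_vertex. intuition. }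
  apply (no_three_ends_connected (neighbours eps u) (neighbours_sym eps u)
           (neighbours_deg2 eps u eps_pos u_S2) (lat_tri eps p q r)
           (lat_tri eps q r (opp_vertex q r p)) (lat_tri eps p r (opp_vertex p r q))).
  - exact (pqr_degree_le1 p q r Hu Hqr Hpr).
  - exact (across_qr_degree_le1 p q r Hu Hpq Hqr Hpr).
  - exact (across_qr_degree_le1 q p r Hu' Hqp Hpr Hqr).
  - intros E. exact (across_qr_neq_pqr p q r Hu (eq_sym E)).
  - intros E. exact (HL_T (eq_sym E)).
  - intros E. exact (HL_B (eq_sym E)).
  - apply F_connected; assumption.
  - apply F_connected; assumption.
Qed.

Lemma one_antipodal_side_boundary_edges p q r : unit_tri p q r -> F (lat_tri eps p q r) ->
  subset2 (lat_tri eps p q r) Rg ->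
  antipodal eps u p q -> ~ antipodal eps u q r -> ~ antipodal eps u p r ->
  (boundary_edge eps u Rg (seg (lat eps q) (lat eps r)) \/
   boundary_edge eps u Rg (seg (lat eps p) (lat eps r))) /\
  (four_points (u_image eps u Rg) ->
   boundary_edge eps u Rg (seg (lat eps q) (lat eps r)) /\
   boundary_edge eps u Rg (seg (lat eps p) (lat eps r))).
Proof.
  intros Hu HT HTR Hpq Hqr Hpr.
  assert (Hedge_qr : ~ F (lat_tri eps q r (opp_vertex q r p)) ->
            boundary_edge eps u Rg (seg (lat eps q) (lat eps r))).
  { apply boundary_edge_of_missing_neighbour; auto using unit_tri_rot.
    rewrite <- tri_rot. exact HTR. }
  assert (Hedge_pr : ~ F (lat_tri eps p r (opp_vertex p r q)) ->
            boundary_edge eps u Rg (seg (lat eps p) (lat eps r))).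
  { apply boundary_edge_of_missing_neighbour; auto using unit_tri_swap23.
    rewrite <- tri_swap23. exact HTR. }
  split.
  - destruct (classic (F (lat_tri eps q r (opp_vertex q r p)))) as [HB|HB]; auto.
    right. apply Hedge_pr. intros HL.
    exact (not_both_across_in_family p q r Hu HT Hpq Hqr Hpr HB HL).
  - intros H4. split.
    + apply Hedge_qr. intros HB.
      exact (four_points_not_sub3 _ _ _ _ H4
               (across_qr_in_family_image
                  p q r Hu HT Hpq Hqr Hpr HB)).
    + apply Hedge_pr. intros HL.
      apply (four_points_not_sub3 _ (u (lat eps p)) (u (lat eps q)) (u (lat eps r)) H4).
      intros v Hv.
      destruct (across_qr_in_family_image
               q p r (unit_tri_swap12 _ _ _ Hu) ltac:(rewrite <- tri_swap12; exact HT)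
               (antipodal_sym _ _ _ _ Hpq) Hpr Hqr HL v Hv) as [E|[E|E]]; auto.
Qed.

Lemma exactly_one_N_boundary_edges z1 z2 z3 : unit_tri z1 z2 z3 ->
  subset2 (lat_tri eps z1 z2 z3) Rg -> exactly_one_N eps u (lat_tri eps z1 z2 z3) ->
  exists E1 E2, E1 <> E2 /\
    subset2 E1 (lat_tri eps z1 z2 z3) /\ subset2 E2 (lat_tri eps z1 z2 z3) /\
    (boundary_edge eps u Rg E1 \/ boundary_edge eps u Rg E2) /\
    (four_points (u_image eps u Rg) -> boundary_edge eps u Rg E1 /\ boundary_edge eps u Rg E2).
Proof.
  intros Hu HTR H1.
  assert (HT : F (lat_tri eps z1 z2 z3)).
  { apply (family_mem_of_covered _ _ _ (lat eps z1) 1); auto.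
    - apply tri_vertex1.
    - lra. }
  destruct (exactly_one_N_tri eps u eps_pos z1 z2 z3 Hu H1) as (p & q & r & Hp & Hpq & Hqr & Hpr).
  assert (Hu' := unit_tri_perm3 _ _ Hp Hu).
  rewrite (lat_tri_perm3 eps _ _ _ _ _ _ Hp) in *.
  destruct (one_antipodal_side_boundary_edges p q r Hu' HT HTR Hpq Hqr Hpr) as [Hone Hfour].
  exists (seg (lat eps q) (lat eps r)), (seg (lat eps p) (lat eps r)).
  split; [|split; [|split; [|split; [exact Hone | exact Hfour]]]].
  - intros E. assert (Hp_in : seg (lat eps q) (lat eps r) (lat eps p)) by (rewrite E; apply seg_end1).
    destruct Hu' as (Hpq' & Hqr' & Hpr').
    destruct (lat_in_edge eps eps_pos q r p p
                (conj Hqr' (conj (lat_adj_sym _ _ Hpr') (lat_adj_sym _ _ Hpq'))) Hp_in) as [-> | ->].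
    + exact (lat_adj_neq _ _ Hpq' eq_refl).
    + exact (lat_adj_neq _ _ Hpr' eq_refl).
  - rewrite tri_rot. apply seg_sub_tri.
  - rewrite tri_swap23. apply seg_sub_tri.
Qed.

End ConnectedFamily.

Theorem lemma5p4 (eps : R) (Om : set2) (u : pt -> vec3) (Rg T : set2) :
  0 < eps -> bounded2 Om -> open2 Om -> SF eps Om u ->
  admissible_region eps u Rg -> in_T eps T -> subset2 T Rg ->
  (exactly_one_N eps u T ->
     exists E, boundary_edge eps u Rg E /\ subset2 E T) /\
  (exactly_one_N eps u T -> four_points (u_image eps u Rg) ->
     exists E1 E2, E1 <> E2 /\
       boundary_edge eps u Rg E1 /\ subset2 E1 T /\
       boundary_edge eps u Rg E2 /\ subset2 E2 T).
Proof.
  intros He _ _ [HS _] [(F & HF_tri & HF_conn & HRg) _] HT HTR.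
  assert (Hu_S2 : forall z, in_S2 (u (lat eps z))) by (intros z; apply HS, lattice_pt_lat).
  destruct (in_TE eps He T HT) as (z1 & z2 & z3 & Hu & ->).
  split.
  - intros H1.
    destruct (exactly_one_N_boundary_edges eps u F Rg He HF_tri HRg Hu_S2 HF_conn z1 z2 z3 Hu HTR H1)
      as (E1 & E2 & _ & HE1 & HE2 & [Hb1 | Hb2] & _); eauto.
  - intros H1 H4.
    destruct (exactly_one_N_boundary_edges eps u F Rg He HF_tri HRg Hu_S2 HF_conn z1 z2 z3 Hu HTR H1)
      as (E1 & E2 & Hne & HE1 & HE2 & _ & Hboth).
    destruct (Hboth H4) as [Hb1 Hb2]. exists E1, E2. auto.
Qed.
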